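(* Let $q\in X^*\setminus\{e\}$ and let $q_0$ be the shortest word in $P_q$. Then $$\sqrt[*]{P_q}=\bigl(P_q\setminus\{q_0\}^*\bigr)\cup\{q_0\}\subseteq\{q_0\}\cup\{v: v\sqsubseteq q\ \wedge\ |q_0|+|v|>|q|\}.$$
   Context: $X$ is a finite alphabet; $X^*$ the finite words (empty word $e$); $|w|$ is length; $w\sqsubseteq\eta$ means $w$ is a prefix of $\eta$, $w\sqsubset\eta$ a proper prefix. $P_q:=\{v: e\sqsubset v\sqsubseteq q\sqsubset v\cdot q\}$; $q_0$ is its shortest element. The star root of $P_q$ is $\sqrt[*]{P_q}:=P_q\setminus(P_q^2\cdot P_q^* )$, i.e. the elements of $P_q$ that are not a concatenation of two or more elements of $P_q$; here $L^*=\bigcup_{i\in\mathbb{N}}L^i$. *)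

From mathcomp Require Import all_boot.
Set Implicit Arguments. Unset Strict Implicit. Unset Printing Implicit Defensive.

Section Lang.
Variable X : finType.

Definition lang := seq X -> Prop.

Definition pprefix (u w : seq X) : Prop := prefix u w /\ u <> w.

Definition lsingle (v : seq X) : lang := fun w => w = v.

Definition lcat (L1 L2 : lang) : lang :=
  fun w => exists u v, [/\ w = u ++ v, L1 u & L2 v].

Fixpoint lpow (L : lang) (n : nat) : lang :=
  match n with
  | 0 => fun w => w = [::]
  | n'.+1 => lcat L (lpow L n')
  end.

Definition lstar (L : lang) : lang := fun w => exists n, lpow L n w.

Definition ldiff (L M : lang) : lang := fun w => L w /\ ~ M w.

Definition star_root (L : lang) : lang := ldiff L (lcat (lpow L 2) (lstar L)).

Definition Pq (q : seq X) : lang :=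
  fun v => [/\ pprefix [::] v, prefix v q & pprefix q (v ++ q)].

End Lang.

From mathcomp Require Import all_boot.
Set Implicit Arguments. Unset Strict Implicit. Unset Printing Implicit Defensive.

(* The elements of P_q are exactly the prefixes [take p q] of q whose length p
   is a period of q, and q0 is the one of least period.  A weak Fine-Wilf
   argument (if p and r are periods with p + r <= |q| then so is r mod p)
   shows that every v in P_q with |q0| + |v| <= |q| has length a multiple of
   |q0|, i.e. v is a power of q0.  Consequently a factorisation of w in P_q as
   u1 u2 y with u1, u2 in P_q and y in P_q^* consists of such short pieces, so
   w is a power of q0; conversely every power q0^k with k >= 2 factorises. *)

Section Periods.
Variables (T : Type) (x0 : T) (s : seq T).

Definition period p := forall i, i + p < size s -> nth x0 s (i + p) = nth x0 s i.

Lemma period0 : period 0.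
Proof. by move=> i _; rewrite addn0. Qed.

Lemma period_subn p r :
  period p -> period r -> p < r -> p + r <= size s -> period (r - p).
Proof.
move=> hp hr /ltnW le_pr hs i hi.
have [ir_s | s_ir] := ltnP (i + r) (size s).
  have e : i + r = i + (r - p) + p by rewrite -addnA subnK.
  by rewrite -(hr i ir_s) e hp // -e.
have le_pi : p <= i by rewrite -(leq_add2r r) (leq_trans hs s_ir).
have e : i + (r - p) = (i - p) + r by rewrite addnBA // addnBAC.
rewrite e hr -?e // -{2}(subnK le_pi) hp // subnK //.
exact: leq_ltn_trans (leq_addr _ _) hi.
Qed.

Lemma period_modn p r :
  0 < p -> period p -> period r -> p + r <= size s -> period (r %% p).
Proof.
move=> p_gt0 hp; elim/ltn_ind: r => r IH hr hs.
case: (ltngtP p r) => [lt_pr | lt_rp | <-]; last by rewrite modnn; apply: period0.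
  rewrite -(subnK (ltnW lt_pr)) modnDr; apply: IH.
  - by rewrite ltn_subrL p_gt0 (ltn_trans p_gt0 lt_pr).
  - exact: period_subn.
  - by apply: leq_trans hs; rewrite leq_add2l leq_subr.
by rewrite modn_small.
Qed.

Lemma take_period_addn p k :
  period p -> p + k <= size s -> take (p + k) s = take p s ++ take k s.
Proof.
move=> hp hs; have le_ps : p <= size s := leq_trans (leq_addr k p) hs.
apply: (@eq_from_nth _ x0) => [|i].
  by rewrite size_cat !size_takel // (leq_trans _ hs) ?leq_addl.
rewrite size_takel // => hi.
rewrite nth_take // nth_cat size_takel //; case: ifPn => [hip | ]; first by rewrite nth_take.
rewrite -leqNgt => le_pi; rewrite nth_take; last by rewrite ltn_subLR // addnC.
by rewrite -(hp (i - p)) subnK // (leq_trans hi).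
Qed.

End Periods.

Section Languages.
Variables (X : finType) (L : lang X).

Lemma lpow_cat n m u v : lpow L n u -> lpow L m v -> lpow L (n + m) (u ++ v).
Proof.
elim: n u => [|n IH] u /=; first by move=> ->.
by move=> [a [b [-> La Lb]]] Lv; exists a, (b ++ v); rewrite catA; split => //; apply: IH.
Qed.

Lemma lstar_cat u v : lstar L u -> lstar L v -> lstar L (u ++ v).
Proof. by move=> [n Lu] [m Lv]; exists (n + m); apply: lpow_cat. Qed.

Lemma lstar1 w : L w -> lstar L w.
Proof. by move=> Lw; exists 1; exists w, [::]; rewrite cats0. Qed.

Lemma lpow_mono (M : lang X) n w : (forall v, L v -> M v) -> lpow L n w -> lpow M n w.
Proof.
move=> LM; elim: n w => [|n IH] w //= [a [b [-> La Lb]]].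
by exists a, b; split; [|apply: LM|apply: IH].
Qed.

Lemma lpow_lcat_lstar n w : lpow L n.+2 w -> lcat (lpow L 2) (lstar L) w.
Proof.
move=> [a [_ [-> La [b [c [-> Lb Lc]]]]]].
exists (a ++ b ++ [::]), c; split; [by rewrite cats0 catA | | by exists n].
by exists a, (b ++ [::]); split => //; exists b, [::].
Qed.

Lemma lcat_lpow2_lstarP w : lcat (lpow L 2) (lstar L) w ->
  exists u1 u2 y, [/\ w = u1 ++ u2 ++ y, L u1, L u2 & lstar L y].
Proof.
move=> [_ [y [-> [u1 [_ [-> L1 [u2 [_ [-> L2 ->]]]]]] Ly]]].
by exists u1, u2, y; rewrite cats0 -catA.
Qed.

End Languages.

Section PeriodPrefixes.
Variables (X : finType) (x0 : X) (q : seq X).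

Lemma Pq_period v : Pq q v ->
  [/\ 0 < size v, size v <= size q, v = take (size v) q & period x0 q (size v)].
Proof.
case=> [[_ v_neq0] v_q [q_vq _]]; split.
- by rewrite lt0n size_eq0; apply/eqP => v0; apply: v_neq0; rewrite v0.
- exact: size_prefix.
- by move: v_q; rewrite prefixE => /eqP.
move=> i hi; move: q_vq; rewrite prefixE => /eqP E.
by rewrite -{1}E nth_take // nth_cat ltnNge leq_addl addnK.
Qed.

Lemma period_Pq p : 0 < p -> p <= size q -> period x0 q p -> Pq q (take p q).
Proof.
move=> p_gt0 le_pq hp; have size_p := size_takel le_pq.
have neq_size (m n : seq X) : size m <> size n -> m <> n by move=> + e; rewrite e.
split; [split | exact: prefix_take | split].
- exact: prefix0s.
- by apply: neq_size; rewrite size_p => p0; rewrite -p0 in p_gt0.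
- have E := take_period_addn (k := size q - p) hp.
  rewrite subnKC // take_size in E.
  by rewrite prefixE take_cat size_p ltnNge le_pq /= -E.
- apply: neq_size; rewrite size_cat size_p => /eqP.
  by rewrite -{1}[size q]add0n eqn_add2r eq_sym => /eqP p0; rewrite p0 in p_gt0.
Qed.

End PeriodPrefixes.

Section StarRoot.
Variables (X : finType) (x0 : X) (q q0 : seq X).
Hypothesis q0_Pq : Pq q q0.
Hypothesis q0_min : forall v, Pq q v -> size q0 <= size v.

Lemma lpow_q0_take m : m * size q0 <= size q -> lpow (lsingle q0) m (take (m * size q0) q).
Proof.
have [_ _ q0E q0_per] := Pq_period x0 q0_Pq.
elim: m => [|m IH]; first by rewrite mul0n take0.
rewrite mulSn => hs; rewrite (take_period_addn q0_per hs) -q0E.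
by exists q0, (take (m * size q0) q); split => //; apply/IH/(leq_trans _ hs)/leq_addl.
Qed.

(* A shorter period would be [size u %% size q0], contradicting minimality. *)
Lemma Pq_short_lstar u : Pq q u -> size u + size q0 <= size q -> lstar (lsingle q0) u.
Proof.
move=> u_Pq hs.
have [q0_gt0 _ _ q0_per] := Pq_period x0 q0_Pq.
have [_ le_uq uE u_per] := Pq_period x0 u_Pq.
have mod_per : period x0 q (size u %% size q0) by apply: period_modn; rewrite // addnC.
have /eqP mod0 : size u %% size q0 == 0.
  rewrite -leqn0 leqNgt; apply/negP => mod_gt0.
  have := q0_min (period_Pq mod_gt0 (leq_trans (leq_mod _ _) le_uq) mod_per).
  by rewrite size_takel ?(leq_trans (leq_mod _ _) le_uq) // leqNgt ltn_pmod.
have sizeE : size u = size u %/ size q0 * size q0.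
  by rewrite {1}(divn_eq (size u) (size q0)) mod0 addn0.
exists (size u %/ size q0); rewrite [X in lpow _ _ X]uE [X in take X q]sizeE.
by apply: lpow_q0_take; rewrite -sizeE.
Qed.

Lemma lstar_Pq_short_lstar v :
  lstar (Pq q) v -> size q0 + size v <= size q -> lstar (lsingle q0) v.
Proof.
move=> [n]; elim: n v => [|n IH] v /=; first by move=> -> _; exists 0.
move=> [a [b [-> a_Pq b_Pq]]]; rewrite size_cat => hs; apply: lstar_cat.
  apply: Pq_short_lstar => //; rewrite addnC.
  by apply: leq_trans hs; rewrite leq_add2l leq_addr.
by apply: IH => //; apply: leq_trans hs; rewrite leq_add2l leq_addl.
Qed.

Lemma star_root_q0 : star_root (Pq q) q0.
Proof.
have [q0_gt0 _ _ _] := Pq_period x0 q0_Pq.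
split=> // /lcat_lpow2_lstarP [u1 [u2 [y [q0E /q0_min le1 /q0_min le2 _]]]].
have : size q0 + size q0 <= size q0.
  by rewrite {3}q0E !size_cat addnA (leq_trans (leq_add le1 le2)) ?leq_addr.
by rewrite -[X in _ <= X]add0n leq_add2r leqNgt q0_gt0.
Qed.

Lemma lstar_q0_decomposable w : lstar (lsingle q0) w -> w <> [::] -> w <> q0 ->
  lcat (lpow (Pq q) 2) (lstar (Pq q)) w.
Proof.
move=> [[|[|n]] w_pow w_neq0 w_neq_q0]; first by case: (w_neq0 w_pow).
  by case: w_pow w_neq_q0 => [a [b [-> -> ->]]]; rewrite cats0.
by apply: (lpow_lcat_lstar (n := n)); apply: lpow_mono w_pow => v ->.
Qed.

Lemma Pq_decomposable_lstar w :
  Pq q w -> lcat (lpow (Pq q) 2) (lstar (Pq q)) w -> lstar (lsingle q0) w.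
Proof.
move=> w_Pq /lcat_lpow2_lstarP [u1 [u2 [y [wE u1_Pq u2_Pq y_star]]]].
have [_ le_wq _ _] := Pq_period x0 w_Pq.
move: le_wq; rewrite wE !size_cat => hs; apply: lstar_cat.
  apply: lstar_Pq_short_lstar; first exact: lstar1.
  by apply: leq_trans hs; rewrite addnC leq_add2l (leq_trans (q0_min u2_Pq)) ?leq_addr.
apply: lstar_Pq_short_lstar; first by apply: lstar_cat y_star; apply: lstar1.
by apply: leq_trans hs; rewrite size_cat leq_add2r (q0_min u1_Pq).
Qed.

End StarRoot.

Theorem mainTheorem11 (X : finType) (q : seq X) (hq : q <> [::])
  (q0 : seq X) (hq0 : Pq q q0) (hmin : forall v, Pq q v -> size q0 <= size v) :
  (forall w, star_root (Pq q) w <->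
     (ldiff (Pq q) (lstar (lsingle q0)) w \/ lsingle q0 w)) /\
  (forall w, star_root (Pq q) w ->
     lsingle q0 w \/ (prefix w q /\ size q < size q0 + size w)).
Proof.
have [x0 _] : exists x0 : X, True by case: q {hq0 hmin} hq => [|x _] //; exists x.
have Pq_neq0 w : Pq q w -> w <> [::] by case=> [[_ /nesym]].
have root_not_lstar w : star_root (Pq q) w -> w <> q0 -> ~ lstar (lsingle q0) w.
  move=> [w_Pq not_dec] w_neq_q0 w_star.
  by apply/not_dec/lstar_q0_decomposable/w_neq_q0/Pq_neq0.
split=> w.
  split=> [w_root | [[w_Pq not_star] | ->]].
  - have [-> | /eqP w_neq_q0] := eqVneq w q0; [by right | left].
    by split; [case: w_root | exact: root_not_lstar].
  - by split=> // /(Pq_decomposable_lstar x0 hq0 hmin w_Pq).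
  - exact (star_root_q0 x0 hq0 hmin).
move=> w_root; have [-> | /eqP w_neq_q0] := eqVneq w q0; [by left | right].
have [[_ w_q _] _] := w_root; split=> //; rewrite ltnNge addnC; apply/negP => short.
exact: root_not_lstar w_root w_neq_q0 (Pq_short_lstar x0 hq0 hmin w_root.1 short).
Qed.
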